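(* Let $n=2$, $d\ge3$, and let $P_1,P_2$ be real quadratic forms on $\mathbb{R}^d$ such that for all linearly independent $\vec w_1,\dots,\vec w_{d-2}\in\mathbb{R}^d$, $\det[\nabla P_1(t);\nabla P_2(t);\vec w_1;\dots;\vec w_{d-2}]\not\equiv0$ as a polynomial in $t$. Let $V\subset\mathbb{R}^{d+2}$ be a nontrivial proper linear subspace. (1) If $1\le\dim V\le d-1$, then $\{t:\dim(\pi_t(V))<\dim V\}$ is contained in the zero set of a nonzero polynomial of degree at most $2$. (2) If $d\le\dim V\le d+1$, then $\{t:\dim(\pi_t(V))<\dim V-1\}$ is contained in the zero set of a nonzero polynomial of degree at most $2$.
   Context: For $t\in\mathbb{R}^d$, $V(t)\subset\mathbb{R}^{d+2}$ is the linear subspace spanned by $(e_j,\partial_jP_1(t),\partial_jP_2(t))$, $j=1,\dots,d$, and $\pi_t$ is the orthogonal projection onto $V(t)$. *)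

(* Real numbers are modelled by an arbitrary real closed
   field R (rcfType). *)
From HB Require Import structures.
From mathcomp Require Import all_boot all_order all_algebra.
Set Implicit Arguments. Unset Strict Implicit. Unset Printing Implicit Defensive.
Import Order.TTheory GRing.Theory Num.Theory.
Local Open Scope ring_scope.

Section Defs.
Variable R : rcfType.

Definition qform {d} (A : 'M[R]_d) (t : 'rV[R]_d) : R := (t *m A *m t^T) 0 0.

Definition qgrad {d} (A : 'M[R]_d) (t : 'rV[R]_d) : 'rV[R]_d := t *m (A + A^T).

(* Matrix whose j-th row is (e_j, d_j P1(t), d_j P2(t)) in R^{d+2};
   its row space is V(t). *)
Definition Vt_mx {d} (A1 A2 : 'M[R]_d) (t : 'rV[R]_d) : 'M[R]_(d, d + 2) :=
  row_mx 1%:M (row_mx (qgrad A1 t)^T (qgrad A2 t)^T).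

(* Orthogonal projection (acting on row vectors, x |-> x *m P) onto the row
   space of a matrix B with linearly independent rows: B^T (B B^T)^{-1} B. *)
Definition orth_proj_mx {m n} (B : 'M[R]_(m, n)) : 'M[R]_n :=
  B^T *m invmx (B *m B^T) *m B.

(* dim pi_t(V), for V the row space of the matrix V. *)
Definition proj_dim {d} (A1 A2 : 'M[R]_d) (t : 'rV[R]_d) (V : 'M[R]_(d + 2)) : nat :=
  \rank (V *m orth_proj_mx (Vt_mx A1 A2 t)).

Definition stack_mx {d} (g1 g2 : 'rV[R]_d) (W : 'M[R]_(d - 2, d)) : 'M[R]_d :=
  \matrix_(i < d, j < d)
    if (i : nat) == 0%N then g1 0 j
    else if (i : nat) == 1%N then g2 0 j
    else if insub (i - 2)%N is Some k then W k j else 0.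

(* A polynomial of degree at most 2 in t in R^d, with coefficients (M, b, c),
   M symmetric: Q(t) = t M t^T + b t^T + c. *)
Definition deg2_eval {d} (M : 'M[R]_d) (b : 'rV[R]_d) (c : R) (t : 'rV[R]_d) : R :=
  (t *m M *m t^T) 0 0 + (b *m t^T) 0 0 + c.

Definition in_deg2_zero_set {d} (S : 'rV[R]_d -> Prop) : Prop :=
  exists (M : 'M[R]_d) (b : 'rV[R]_d) (c : R),
    M^T = M /\ ~ (M = 0 /\ b = 0 /\ c = 0) /\
    forall t, S t -> deg2_eval M b c t = 0.

End Defs.

From HB Require Import structures.
From mathcomp Require Import all_boot all_order all_algebra ring zify.
Set Implicit Arguments. Unset Strict Implicit. Unset Printing Implicit Defensive.
Import Order.TTheory GRing.Theory Num.Theory.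
Local Open Scope ring_scope.

(* Let G(t) be the 2 x d matrix with rows grad P1(t), grad P2(t). Then V(t)
   is the row space of the matrix [1 | G(t)^T], whose rows are independent,
   and V(t)^perp is the row space of E(t) = [-G(t) | 1]; so x is killed by
   pi_t iff x = y E(t) for some y in R^2. If the rows of W are orthogonal to
   V, every x in V /\ ker pi_t satisfies y E(t) W^T = 0, which gives
   dim (V /\ ker pi_t) <= 2 - rank (E(t) W^T). By rank-nullity:
   (1) if dim pi_t(V) < dim V then det (E(t) W^T) = 0 for each pair W in V^perp;
   (2) if dim pi_t(V) < dim V - 1 then E(t) w^T = 0 for each w in V^perp.
   The entries of E(t) W^T are affine in t, so the determinant in (1) and the
   sum of squares of the two entries in (2) are polynomials of degree <= 2.
   They are nonzero by the nondegeneracy hypothesis, which forbids a subspace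
   of R^d of dimension <= 2 from meeting ker G(t) for every t, provided W is
   chosen well: in (1), dim V^perp >= 3 yields W = [Y | Z] with Y independent
   or W = [0 | 1]; in (2) any nonzero w works. *)

Lemma ord2_cases (i : 'I_2) : i = 0 \/ i = 1.
Proof. by case: i => [[|[|//]] lt_i2]; [left | right]; apply: val_inj. Qed.

Section FieldLinearAlgebra.
Variable F : fieldType.

Lemma det_mx22 (A : 'M[F]_2) : \det A = A 0 0 * A 1 1 - A 0 1 * A 1 0.
Proof.
rewrite (expand_det_row _ 0) !big_ord_recl big_ord0 addr0 /cofactor.
rewrite !det_mx11 !mxE /= expr0 expr1.
have -> : lift (0 : 'I_2) (0 : 'I_1) = 1 by apply/val_inj.
have -> : lift (1 : 'I_2) (0 : 'I_1) = 0 by apply/val_inj.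
have -> : (ord0 : 'I_2) = 0 by apply/val_inj.
ring.
Qed.

Lemma row_free_sub k m n (U : 'M[F]_(m, n)) : (k <= \rank U)%N ->
  exists W : 'M[F]_(k, n), row_free W /\ (W <= U)%MS.
Proof.
move=> le_kU; exists (pid_mx k *m row_base U); split.
  by rewrite /row_free mxrankMfree ?row_base_free // rank_pid_mx.
by rewrite (submx_trans (submxMl _ _)) // eq_row_base.
Qed.

Lemma orth_kermx m n p (V : 'M[F]_(m, n)) (X : 'M[F]_(p, n)) :
  (X <= kermx V^T)%MS -> V *m X^T = 0.
Proof. by move/sub_kermxP=> XV0; rewrite -[V]trmxK -trmx_mul XV0 trmx0. Qed.

(* A subspace of F^(n+2) of dimension >= 3 contains the rows of some [Y | Z]
   with Y : 'M_(2, n) independent, or else the two last coordinate vectors: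
   if its projection to the first n coordinates has dimension <= 1, the
   subspace meets {0} x F^2 in dimension >= 2, i.e. contains all of it. *)
Lemma sub_pair_shape n p (C : 'M[F]_(p, n + 2)) : (3 <= \rank C)%N ->
  exists (Y : 'M[F]_(2, n)) (Z : 'M[F]_2),
    (row_free Y \/ (Y = 0 /\ Z = 1%:M)) /\ (row_mx Y Z <= C)%MS.
Proof.
move=> rC; have [le2 | lt2] := leqP 2 (\rank (lsubmx C)).
  have [Y [freeY /submxP [D YE]]] := row_free_sub le2.
  exists (lsubmx (D *m C)), (rsubmx (D *m C)); rewrite hsubmxK submxMl.
  by split=> //; left; rewrite -mulmx_lsub -YE.
exists 0, 1%:M; split; first by right.
pose L : 'M[F]_(n + 2, n) := col_mx 1%:M 0.
have XLE q (X : 'M[F]_(q, n + 2)) : X *m L = lsubmx X.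
  by rewrite -{1}[X]hsubmxK mul_row_col mulmx1 mulmx0 addr0.
set K := (C :&: kermx L)%MS.
have rK : (\rank (C *m L) + \rank K)%N = \rank C := mxrank_mul_ker C L.
have KE : (K <= row_mx 0 1%:M)%MS.
  have K0 : lsubmx K = 0 by rewrite -XLE; apply/sub_kermxP; exact: capmxSr.
  by apply/submxP; exists (rsubmx K); rewrite mul_mx_row mulmx0 mulmx1 -K0 hsubmxK.
apply: (submx_trans _ (capmxSl C (kermx L))); rewrite -(mxrank_leqif_sup KE).2.
rewrite eqn_leq mxrankS //=; rewrite XLE in rK.
set r := \rank (row_mx _ _); have : (r <= 2)%N by apply: rank_leq_row.
lia.
Qed.

End FieldLinearAlgebra.

Section RealLinearAlgebra.
Variable R : realFieldType.

Lemma sqr_add_eq0 (x y : R) : x * x + y * y = 0 -> x = 0 /\ y = 0.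
Proof.
move/eqP; rewrite -!expr2 paddr_eq0 ?sqr_ge0 // !sqrf_eq0.
by case/andP=> /eqP -> /eqP ->.
Qed.

Lemma self_dot_eq0 n (u : 'rV[R]_n) : (u *m u^T) 0 0 = 0 -> u = 0.
Proof.
rewrite mxE => /eqP; rewrite psumr_eq0 => [/allP u0|i _]; last first.
  by rewrite mxE -expr2 sqr_ge0.
apply/rowP => k; have := u0 k (mem_index_enum _).
by rewrite !mxE -expr2 sqrf_eq0 => /eqP.
Qed.

Lemma gram_unit m n (B : 'M[R]_(m, n)) : row_free B -> B *m B^T \in unitmx.
Proof.
move=> freeB; rewrite unitmxE unitfE; apply/negP => /det0P [v v_nz vG0].
have vB0 : v *m B = 0.
  by apply: self_dot_eq0; rewrite trmx_mul mulmxA -(mulmxA v) vG0 mul0mx mxE.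
by move: v_nz; rewrite -(mulmx_free_eq0 _ freeB) vB0 eqxx.
Qed.

End RealLinearAlgebra.

Section OrthogonalProjection.
Variable R : rcfType.

Lemma orth_proj_mx_eq0 m n p (B : 'M[R]_(m, n)) (X : 'M[R]_(p, n)) :
  row_free B -> X *m orth_proj_mx B = 0 -> X *m B^T = 0.
Proof.
move=> freeB; rewrite /orth_proj_mx !mulmxA => XP0.
have XBG0 : X *m B^T *m invmx (B *m B^T) = 0.
  by apply: (row_free_inj freeB); rewrite /= XP0 mul0mx.
by rewrite -(mulmxKV (gram_unit freeB) (X *m B^T)) XBG0 mul0mx.
Qed.

End OrthogonalProjection.

Section QuadraticPolynomials.
Variables (R : rcfType) (d : nat).

Definition dot (t u : 'rV[R]_d) : R := (t *m u^T) 0 0.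
Definition qv (M : 'M[R]_d) (t : 'rV[R]_d) : R := (t *m M *m t^T) 0 0.

Lemma dotD t u v : dot t (u + v) = dot t u + dot t v.
Proof. by rewrite /dot linearD /= mulmxDr mxE. Qed.
Lemma dotN t u : dot t (- u) = - dot t u.
Proof. by rewrite /dot linearN /= mulmxN mxE. Qed.
Lemma dotZ t a u : dot t (a *: u) = a * dot t u.
Proof. by rewrite /dot linearZ /= -scalemxAr mxE. Qed.

Lemma qvD M1 M2 t : qv (M1 + M2) t = qv M1 t + qv M2 t.
Proof. by rewrite /qv mulmxDr mulmxDl mxE. Qed.
Lemma qvN M t : qv (- M) t = - qv M t.
Proof. by rewrite /qv mulmxN mulNmx mxE. Qed.
Lemma qv0 t : qv 0 t = 0.
Proof. by rewrite /qv mulmx0 mul0mx mxE. Qed.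

Lemma qv_outer u v t : qv (u^T *m v) t = dot t u * dot t v.
Proof.
rewrite /qv /dot mulmxA -mulmxA [LHS]mxE big_ord1.
by rewrite -[v *m t^T]trmxK trmx_mul trmxK [X in _ * X]mxE.
Qed.

Definition symmx (M : 'M[R]_d) : 'M[R]_d := 2^-1 *: (M + M^T).

Lemma symmx_sym M : (symmx M)^T = symmx M.
Proof. by rewrite linearZ /= linearD /= trmxK addrC. Qed.

Lemma qv_symmx M t : qv (symmx M) t = qv M t.
Proof.
have qvT : qv M^T t = qv M t.
  rewrite /qv; have -> : t *m M^T *m t^T = (t *m M *m t^T)^T.
    by rewrite !trmx_mul trmxK mulmxA.
  by rewrite mxE.
have qvZ a N : qv (a *: N) t = a * qv N t by rewrite /qv -scalemxAr -scalemxAl mxE.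
rewrite qvZ qvD qvT.
by rewrite -mulr2n -[qv M t *+ 2]mulr_natl mulrA mulVf ?mul1r // pnatr_eq0.
Qed.

Lemma deg2E M b c t : deg2_eval M b c t = qv M t + dot t b + c.
Proof.
by rewrite /deg2_eval -[b *m t^T]trmxK trmx_mul trmxK [X in _ + X + _]mxE.
Qed.

End QuadraticPolynomials.

Section SubspacesVt.
Variables (R : rcfType) (d : nat) (A1 A2 : 'M[R]_d).

Definition grads (t : 'rV[R]_d) : 'M[R]_(2, d) := col_mx (qgrad A1 t) (qgrad A2 t).

(* E(t) = [-G(t) | 1]: its rows span the orthogonal complement of V(t). *)
Definition perp_mx (t : 'rV[R]_d) : 'M[R]_(2, d + 2) := row_mx (- grads t) 1%:M.

Lemma Vt_mxE t : Vt_mx A1 A2 t = row_mx 1%:M (grads t)^T.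
Proof. by rewrite /Vt_mx /grads -tr_col_mx. Qed.

Lemma Vt_mx_free t : row_free (Vt_mx A1 A2 t).
Proof.
rewrite /row_free eqn_leq rank_leq_row -{1}(mxrank1 R d).
have <- : Vt_mx A1 A2 t *m col_mx 1%:M 0 = 1%:M.
  by rewrite Vt_mxE mul_row_col mulmx1 mulmx0 addr0.
exact: mxrankM_maxl.
Qed.

Lemma orth_proj_Vt_eq0 m (X : 'M[R]_(m, d + 2)) t :
  X *m orth_proj_mx (Vt_mx A1 A2 t) = 0 -> X = rsubmx X *m perp_mx t.
Proof.
move/(orth_proj_mx_eq0 (Vt_mx_free t)).
rewrite Vt_mxE tr_row_mx trmxK trmx1 -{1}[X]hsubmxK mul_row_col mulmx1.
move/eqP; rewrite addr_eq0 => /eqP XlE.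
by rewrite mul_mx_row mulmx1 mulmxN -XlE hsubmxK.
Qed.

(* Key estimate: if the rows of W are orthogonal to V, then a vector of V
   killed by pi_t is y E(t) with y E(t) W^T = 0, whence
   dim (V /\ ker pi_t) <= 2 - rank (E(t) W^T). *)
Lemma ker_proj_rank p t (V : 'M[R]_(d + 2)) (W : 'M[R]_(p, d + 2)) :
  V *m W^T = 0 ->
  (\rank (V :&: kermx (orth_proj_mx (Vt_mx A1 A2 t))) + \rank (perp_mx t *m W^T)
     <= 2)%N.
Proof.
move=> VW0; set K := (V :&: _)%MS.
have KE : K = rsubmx K *m perp_mx t.
  by apply: orth_proj_Vt_eq0; apply/sub_kermxP; exact: capmxSr.
have : (rsubmx K <= kermx (perp_mx t *m W^T))%MS.
  apply/sub_kermxP; rewrite mulmxA -KE.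
  have /submxP [D ->] : (K <= V)%MS by exact: capmxSl.
  by rewrite -mulmxA VW0 mulmx0.
move/mxrankS; rewrite mxrank_ker => le_K.
have := mxrankM_maxl (rsubmx K) (perp_mx t); rewrite -KE.
set b := \rank (rsubmx K); set c := \rank (_ *m W^T).
have : (c <= 2)%N by apply: rank_leq_row.
lia.
Qed.

Lemma proj_drop_det t (V : 'M[R]_(d + 2)) (W : 'M[R]_(2, d + 2)) :
  V *m W^T = 0 -> (proj_dim A1 A2 t V < \rank V)%N -> \det (perp_mx t *m W^T) = 0.
Proof.
move=> VW0 drop; apply/eqP; rewrite -[_ == 0]negbK -unitfE -unitmxE -row_free_unit.
apply/negP => /eqP full; have := ker_proj_rank t VW0.
have := mxrank_mul_ker V (orth_proj_mx (Vt_mx A1 A2 t)); move: drop.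
rewrite /proj_dim full.
set k := \rank (V :&: _)%MS; set a := \rank (V *m _); lia.
Qed.

Lemma proj_drop2_perp t (V : 'M[R]_(d + 2)) (w : 'rV[R]_(d + 2)) :
  V *m w^T = 0 -> (proj_dim A1 A2 t V < \rank V - 1)%N -> perp_mx t *m w^T = 0.
Proof.
move=> Vw0 drop; apply/eqP; rewrite -mxrank_eq0; have := ker_proj_rank t Vw0.
have := mxrank_mul_ker V (orth_proj_mx (Vt_mx A1 A2 t)); move: drop; rewrite /proj_dim.
set k := \rank (V :&: _)%MS; set a := \rank (V *m _); set c := \rank (_ *m w^T); lia.
Qed.

Definition hess (i : 'I_2) : 'M[R]_d := if i == 0 then A1 + A1^T else A2 + A2^T.

Lemma row_grads t i : row i (grads t) = t *m hess i.
Proof.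
apply/rowP => k; rewrite mxE /grads mxE; case: splitP => j ij.
  have -> : i = 0 by apply/val_inj; rewrite /= ij; case: j {ij} => [[]].
  by rewrite /hess eqxx ord1.
have -> : i = 1 by apply/val_inj; rewrite /= ij; case: j {ij} => [[]].
by rewrite /hess /= ord1.
Qed.

Definition hess_row p (Y : 'M[R]_(p, d)) (i : 'I_2) (j : 'I_p) : 'rV[R]_d :=
  row j Y *m (hess i)^T.

Lemma grads_mulE p t (Y : 'M[R]_(p, d)) i j :
  (grads t *m Y^T) i j = dot t (hess_row Y i j).
Proof.
have -> : (grads t *m Y^T) i j = (row i (grads t) *m col j Y^T) 0 0.
  by rewrite !mxE; apply: eq_bigr => k _; rewrite !mxE.
by rewrite row_grads -tr_row /dot /hess_row trmx_mul trmxK mulmxA.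
Qed.

Lemma perp_mulE p t (Y : 'M[R]_(p, d)) (Z : 'M[R]_(p, 2)) i j :
  (perp_mx t *m (row_mx Y Z)^T) i j = Z j i - dot t (hess_row Y i j).
Proof.
by rewrite -grads_mulE /perp_mx tr_row_mx mul_row_col mulNmx mul1mx !mxE addrC.
Qed.

Lemma stack_mx_singular (g1 g2 z : 'rV[R]_d) (W : 'M[R]_(d - 2, d)) :
  z != 0 -> g1 *m z^T = 0 -> g2 *m z^T = 0 -> z *m W^T = 0 ->
  \det (stack_mx g1 g2 W) = 0.
Proof.
move=> z_nz g1z g2z zW; rewrite -det_tr; apply/eqP/det0P; exists z => //.
apply/rowP => j; rewrite !mxE; under eq_bigr do rewrite !mxE.
case: eqP => [_|_].
  transitivity ((g1 *m z^T) 0 0); last by rewrite g1z mxE.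
  by rewrite mxE; apply: eq_bigr => k _; rewrite mxE mulrC.
case: eqP => [_|_].
  transitivity ((g2 *m z^T) 0 0); last by rewrite g2z mxE.
  by rewrite mxE; apply: eq_bigr => k _; rewrite mxE mulrC.
case: insubP => [k _ _|_]; last by rewrite big1 // => i _; rewrite mulr0.
transitivity ((z *m W^T) 0 k); last by rewrite zW mxE.
by rewrite mxE; apply: eq_bigr => i _; rewrite mxE.
Qed.

Section Nondegenerate.
Hypothesis nondeg : forall W : 'M[R]_(d - 2, d), row_free W ->
  exists t : 'rV[R]_d, \det (stack_mx (qgrad A1 t) (qgrad A2 t) W) != 0.

(* A subspace Y of dimension <= 2 cannot meet ker G(t) for every t: d - 2
   independent vectors orthogonal to Y would make the determinant of the
   hypothesis vanish identically. *)
Lemma no_common_kernel p (Y : 'M[R]_(p, d)) : (p <= 2)%N ->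
  ~ (forall t, exists z : 'rV[R]_d, [/\ z != 0, (z <= Y)%MS & grads t *m z^T = 0]).
Proof.
move=> le_p2 kerY.
have [W [freeW /orth_kermx YW0]] : exists W : 'M[R]_(d - 2, d),
    row_free W /\ (W <= kermx Y^T)%MS.
  by apply: row_free_sub; rewrite mxrank_ker mxrank_tr; have := rank_leq_row Y; lia.
have [t /eqP det_nz] := nondeg freeW; have [z [z_nz /submxP [D zE] Gz0]] := kerY t.
have zW0 : z *m W^T = 0 by rewrite zE -mulmxA YW0 mulmx0.
have /eq_col_mx [g1z g2z] : col_mx (qgrad A1 t *m z^T) (qgrad A2 t *m z^T) = col_mx 0 0.
  by rewrite col_mx0 -mul_col_mx; exact: Gz0.
exact/det_nz/(stack_mx_singular z_nz g1z g2z zW0).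
Qed.

Lemma det_perp_poly (S : 'rV[R]_d -> Prop) (Y : 'M[R]_(2, d)) (Z : 'M[R]_2) :
  row_free Y \/ (Y = 0 /\ Z = 1%:M) ->
  (forall t, S t -> \det (perp_mx t *m (row_mx Y Z)^T) = 0) -> in_deg2_zero_set S.
Proof.
move=> shape detS; pose u := hess_row Y.
pose M := (u 0 0)^T *m u 1 1 - (u 0 1)^T *m u 1 0.
pose b := (Z 1 0 *: u 1 0 + Z 0 1 *: u 0 1) - (Z 0 0 *: u 1 1 + Z 1 1 *: u 0 0).
pose c := Z 0 0 * Z 1 1 - Z 1 0 * Z 0 1.
have detE t : \det (perp_mx t *m (row_mx Y Z)^T) = deg2_eval (symmx M) b c t.
  rewrite det_mx22 !perp_mulE deg2E qv_symmx /M /b /c /u.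
  by rewrite qvD qvN !qv_outer !(dotD, dotN, dotZ); ring.
exists (symmx M), b, c; split; first exact: symmx_sym.
split; last by move=> t /detS; rewrite detE.
case: shape => [freeY [M0 _] | [_ Z1] [_ [_ c0]]]; last first.
  by move: c0; rewrite /c Z1 !mxE /= mulr1 mulr0 subr0 => /eqP; rewrite oner_eq0.
apply: (no_common_kernel (Y := Y)) => // t.
have : \det (Y *m (grads t)^T) == 0.
  have qM0 : qv M t = 0 by rewrite -qv_symmx M0 qv0.
  rewrite -det_tr trmx_mul trmxK det_mx22 !grads_mulE -qM0 /M /u.
  by rewrite qvD qvN !qv_outer.
case/det0P => v v_nz vYG0; exists (v *m Y); split; first by rewrite mulmx_free_eq0.
  exact: submxMl.
by rewrite -[grads t]trmxK -trmx_mul -mulmxA vYG0 trmx0.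
Qed.

Lemma perp_poly (S : 'rV[R]_d -> Prop) (Y : 'rV[R]_d) (Z : 'rV[R]_2) :
  row_mx Y Z != 0 ->
  (forall t, S t -> perp_mx t *m (row_mx Y Z)^T = 0) -> in_deg2_zero_set S.
Proof.
move=> YZ_nz perpS; pose u i := hess_row Y i 0.
pose M := (u 0)^T *m u 0 + (u 1)^T *m u 1.
pose b := - ((Z 0 0 + Z 0 0) *: u 0 + (Z 0 1 + Z 0 1) *: u 1).
pose c := Z 0 0 * Z 0 0 + Z 0 1 * Z 0 1.
have sqE t : (perp_mx t *m (row_mx Y Z)^T) 0 0 ^+ 2
           + (perp_mx t *m (row_mx Y Z)^T) 1 0 ^+ 2 = deg2_eval M b c t.
  rewrite !perp_mulE deg2E /M /b /c /u.
  by rewrite qvD !qv_outer !(dotD, dotN, dotZ); ring.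
exists M, b, c; split; first by rewrite /M linearD /= !trmx_mul !trmxK.
split; last by move=> t /perpS perp0; rewrite -sqE perp0 !mxE; ring.
move=> [M0 [_ c0]]; have [Z00 Z01] := sqr_add_eq0 c0.
have u_eq0 k : u 0 0 k = 0 /\ u 1 0 k = 0.
  by apply: sqr_add_eq0; have := congr1 (fun N : 'M[R]_d => N k k) M0;
     rewrite /= !mxE !big_ord1 !mxE.
have Z0 : Z = 0 by apply/rowP => i; rewrite mxE; case: (ord2_cases i) => ->.
have uY0 i : hess_row Y i 0 = 0.
  apply/rowP => k; transitivity (0 : R); last by rewrite mxE.
  by case: (ord2_cases i) => ->; [exact: (u_eq0 k).1 | exact: (u_eq0 k).2].
apply: (no_common_kernel (Y := Y)) => // t; exists Y; split.
- by apply: contraNneq YZ_nz => ->; rewrite Z0 row_mx0.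
- exact: submx_refl.
- by apply/matrixP => i j; rewrite grads_mulE ord1 uY0 /dot trmx0 mulmx0 !mxE.
Qed.

End Nondegenerate.

End SubspacesVt.

Unset Implicit Arguments.
Set Strict Implicit.

Theorem mainTheorem17 (R : rcfType) (d : nat) (A1 A2 : 'M[R]_d) :
  (3 <= d)%N -> A1^T = A1 -> A2^T = A2 ->
  (forall W : 'M[R]_(d - 2, d), row_free W ->
     exists t : 'rV[R]_d, \det (stack_mx (qgrad A1 t) (qgrad A2 t) W) != 0) ->
  forall V : 'M[R]_(d + 2), (0 < \rank V < d + 2)%N ->
    ((1 <= \rank V <= d - 1)%N ->
       in_deg2_zero_set (fun t => (proj_dim A1 A2 t V < \rank V)%N)) /\
    ((d <= \rank V <= d + 1)%N ->
       in_deg2_zero_set (fun t => (proj_dim A1 A2 t V < \rank V - 1)%N)).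
Proof.
move=> _ _ _ nondeg V _; set C := kermx V^T.
have rC : \rank C = (d + 2 - \rank V)%N by rewrite mxrank_ker mxrank_tr.
split => /andP [rV_ge rV_le].
- have le3C : (3 <= \rank C)%N by lia.
  have [Y [Z [shape /orth_kermx VW0]]] := sub_pair_shape le3C.
  by apply: (det_perp_poly nondeg shape) => t; apply: proj_drop_det.
- have le1C : (1 <= \rank C)%N by lia.
  have [w [freew /orth_kermx Vw0]] := row_free_sub le1C.
  apply: (perp_poly nondeg (Y := lsubmx w) (Z := rsubmx w)); rewrite hsubmxK.
    by apply: contraTneq freew => ->; rewrite /row_free mxrank0.
  by move=> t; apply: proj_drop2_perp.
Qed.
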